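(* Let $\lambda$ be a regular uncountable cardinal, $\kappa<\lambda$, and $\mathcal{C}=\langle\mathcal{C}_\alpha\mid\alpha<\lambda\rangle$ a coherent sequence of length $\lambda$ and width $<\kappa$. Suppose there is an unbounded $A\subseteq\lambda$ such that for every $\alpha\in A$ there is $C\in\mathcal{C}_\alpha$ with $A\cap\alpha\subseteq C$. Then $\mathcal{C}$ has a thread.
   Context: For a set of ordinals $A$, $\mathrm{acc}(A)$ is the set of $\beta<\sup\{\alpha+1\mid\alpha\in A\}$ with $\beta=\sup(A\cap\beta)$. A coherent sequence of length $\lambda$ and width $<\eta$ is $\mathcal{C}=\langle\mathcal{C}_\alpha\mid\alpha<\lambda\rangle$ where each $\mathcal{C}_\alpha$ is a nonempty set of fewer than $\eta$ closed unbounded subsets of $\alpha$ (for successor $\alpha=\beta+1$, $\mathcal{C}_\alpha=\{\{\beta\}\}$), such that for all $\beta<\lambda$, $C\in\mathcal{C}_\beta$ and $\alpha\in\mathrm{acc}(C)$, $C\cap\alpha\in\mathcal{C}_\alpha$. A thread through $\mathcal{C}$ is a club $D\subseteq\lambda$ with $D\cap\alpha\in\mathcal{C}_\alpha$ for all $\alpha\in\mathrm{acc}(D)$. *)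

(* Ordinals below a cardinal lambda are modelled by a type T
   carrying a strict well-order [lt]; subsets are predicates T -> Prop;
   cardinalities are compared via injections. *)
From Stdlib Require Import Classical.

Section Defs.
Context {T : Type} (lt : T -> T -> Prop).

Definition le (x y : T) : Prop := lt x y \/ x = y.

Definition strict_well_order : Prop :=
  (forall x, ~ lt x x) /\
  (forall x y z, lt x y -> lt y z -> lt x z) /\
  (forall x y, lt x y \/ x = y \/ lt y x) /\
  well_founded lt.

Definition is_succ (beta alpha : T) : Prop :=
  lt beta alpha /\ forall g, lt beta g -> le alpha g.

Definition limit_point (X : T -> Prop) (beta : T) : Prop :=
  (exists g, lt g beta) /\
  forall g, lt g beta -> exists a, X a /\ lt g a /\ lt a beta.

(* acc(X) exactly as in the paper:
   beta < sup{a+1 | a ∈ X}  and  beta = sup (X ∩ beta) *)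
Definition acc (X : T -> Prop) (beta : T) : Prop :=
  (exists a, X a /\ le beta a) /\
  forall g, lt g beta -> exists a, X a /\ lt g a /\ lt a beta.

Definition club_in (alpha : T) (C : T -> Prop) : Prop :=
  (forall x, C x -> lt x alpha) /\
  (forall g, lt g alpha -> exists c, C c /\ le g c) /\
  (forall b, lt b alpha -> limit_point C b -> C b).

Definition club (D : T -> Prop) : Prop :=
  (forall g, exists d, D d /\ le g d) /\
  (forall b, limit_point D b -> D b).

Definition restrict (X : T -> Prop) (alpha : T) : T -> Prop :=
  fun x => X x /\ lt x alpha.

End Defs.

Definition card_lt (X Y : Type) : Prop :=
  (exists f : X -> Y, forall a b, f a = f b -> a = b) /\
  ~ (exists g : Y -> X, forall a b, g a = g b -> a = b).

Definition regular_uncountable_cardinal {T : Type} (lt : T -> T -> Prop) : Prop :=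
  strict_well_order lt /\
  (forall alpha : T, card_lt {b : T | lt b alpha} T) /\
  (forall A : T -> Prop, card_lt {a : T | A a} T ->
     exists b, forall a, A a -> lt a b) /\
  ~ (exists f : T -> nat, forall a b, f a = f b -> a = b).

(* coherent sequence of length lambda and width < kappa (kappa given by a type K) *)
Definition coherent_seq {T : Type} (lt : T -> T -> Prop) (K : Type)
  (Cs : T -> (T -> Prop) -> Prop) : Prop :=
  (forall alpha, exists C, Cs alpha C) /\
  (forall alpha C, Cs alpha C -> club_in lt alpha C) /\
  (forall alpha, card_lt {C : T -> Prop | Cs alpha C} K) /\
  (forall beta alpha, is_succ lt beta alpha ->
     forall C, Cs alpha C <-> (forall x, C x <-> x = beta)) /\
  (forall beta C alpha, Cs beta C -> acc lt C alpha ->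
     Cs alpha (restrict lt C alpha)).

Definition thread {T : Type} (lt : T -> T -> Prop)
  (Cs : T -> (T -> Prop) -> Prop) (D : T -> Prop) : Prop :=
  club lt D /\ forall alpha, acc lt D alpha -> Cs alpha (restrict lt D alpha).

From Pilot Require Import Defs.
From Stdlib Require Import Classical ClassicalEpsilon FunctionalExtensionality
  PropExtensionality ProofIrrelevance.

(* For a limit point [e] of [A], call [E] a cofinal trace at [e] if [E = C_a ∩ e] for
   unboundedly many [a ∈ A], where [C_a ∈ 𝒞_a] is a chosen club containing [A ∩ a].  Since
   [λ] is regular and [|𝒞_e| < κ < λ], cofinal traces exist at every such [e] and each one
   extends to a cofinal trace at any larger limit point of [A].

   If for some [s] there are unboundedly many [e] at which distinct cofinal traces already
   differ below [s], then above [s] a cofinal trace is determined by its restriction to a fixed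
   [e0 > s]; the cofinal traces through one trace at [e0] cohere, and their union is a thread.
   Otherwise pressing down yields [h] such that no [e > h s] separates its traces below [s].
   This is refuted at a closure point [e] of [h] whose cofinality exceeds the number of cofinal
   traces at [e]: the points where pairs of traces first differ are then bounded below [e].
   When all trace sets are finite an [ω]-limit works; otherwise [e] is a limit of length [ρ],
   the least ordinal too large to inject into the trace sets, and [ρ] has large cofinality
   because infinite well-orderable sets absorb their squares (Hessenberg, via Gödel's pairing
   order). *)

Definition injects {X Y : Type} (P : X -> Prop) (Q : Y -> Prop) : Prop :=
  exists f : X -> Y, (forall x, P x -> Q (f x)) /\
    (forall x y, P x -> P y -> f x = f y -> x = y).

Lemma injects_incl {X : Type} (P Q : X -> Prop) :
  (forall x, P x -> Q x) -> injects P Q.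
Proof. intros H. exists (fun x => x). split; auto. Qed.

Lemma injects_trans {X Y Z : Type} (P : X -> Prop) (Q : Y -> Prop) (R : Z -> Prop) :
  injects P Q -> injects Q R -> injects P R.
Proof.
  intros [f [Hf Hfi]] [g [Hg Hgi]]. exists (fun x => g (f x)). split.
  - auto.
  - intros x y Hx Hy E. apply Hfi; auto.
Qed.

Lemma injects_subr {X Y : Type} (P : X -> Prop) (Q Q' : Y -> Prop) :
  (forall y, Q y -> Q' y) -> injects P Q -> injects P Q'.
Proof. intros H [f [Hf Hfi]]. exists f. split; auto. Qed.

Lemma partial_choice {X Y : Type} (y0 : Y) (P : X -> Prop) (R : X -> Y -> Prop) :
  (forall x, P x -> exists y, R x y) -> exists f : X -> Y, forall x, P x -> R x (f x).
Proof.
  intros H. exists (fun x => epsilon (inhabits y0) (fun y => P x -> R x y)).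
  intros x Hx. apply (epsilon_spec (inhabits y0) (fun y => P x -> R x y)); [|exact Hx].
  destruct (H x Hx) as [y Hy]. exists y. auto.
Qed.

Lemma injects_of_surj {X Y : Type} (P : X -> Prop) (Q : Y -> Prop) (f : X -> Y) :
  (exists x, P x) -> (forall y, Q y -> exists x, P x /\ f x = y) -> injects Q P.
Proof.
  intros [x0 _] H. destruct (partial_choice x0 Q (fun y x => P x /\ f x = y) H) as [g Hg].
  exists g. split.
  - intros y Hy. apply (Hg y Hy).
  - intros y y' Hy Hy' E. destruct (Hg y Hy) as [_ <-]. destruct (Hg y' Hy') as [_ <-].
    rewrite E. reflexivity.
Qed.

Definition prod_pred {X Y : Type} (P : X -> Prop) (Q : Y -> Prop) : X * Y -> Prop :=
  fun p => P (fst p) /\ Q (snd p).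

Lemma injects_prod {X Y X' Y' : Type} (P : X -> Prop) (Q : Y -> Prop)
  (P' : X' -> Prop) (Q' : Y' -> Prop) :
  injects P P' -> injects Q Q' -> injects (prod_pred P Q) (prod_pred P' Q').
Proof.
  intros [f [Hf Hfi]] [g [Hg Hgi]]. exists (fun p => (f (fst p), g (snd p))). split.
  - intros [a b] [Ha Hb]. split; simpl in *; auto.
  - intros [a b] [c d] [Ha Hb] [Hc Hd] E. simpl in *. injection E as E1 E2.
    f_equal; auto.
Qed.

Definition infinite {X : Type} (P : X -> Prop) : Prop := injects (fun _ : nat => True) P.

Lemma infinite_injects {X Y : Type} (P : X -> Prop) (Q : Y -> Prop) :
  infinite P -> injects P Q -> infinite Q.
Proof. apply injects_trans. Qed.

Lemma infinite_incl {X : Type} (P P' : X -> Prop) :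
  (forall x, P x -> P' x) -> infinite P -> infinite P'.
Proof. intros H HI. exact (injects_subr _ _ _ H HI). Qed.

Lemma chain_injective {X : Type} (R : X -> X -> Prop) (s : nat -> X) :
  (forall x, ~ R x x) -> (forall x y z, R x y -> R y z -> R x z) ->
  (forall n, R (s n) (s (S n))) -> forall i j, s i = s j -> i = j.
Proof.
  intros Hirr Htr Hs.
  assert (Hlt : forall i j, i < j -> R (s i) (s j)).
  { intros i j Hij. induction Hij; eauto. }
  intros i j E. destruct (PeanoNat.Nat.lt_trichotomy i j) as [h|[h|h]]; auto; exfalso.
  - apply (Hirr (s j)). rewrite <- E at 1. auto.
  - apply (Hirr (s i)). rewrite E at 1. auto.
Qed.

Lemma infinite_or {X : Type} (P Q : X -> Prop) :
  infinite (fun x => P x \/ Q x) -> infinite P \/ infinite Q.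
Proof.
  intros [s [Hs Hsi]].
  destruct (classic (forall N, exists n, N <= n /\ P (s n))) as [H|H].
  - left.
    destruct (partial_choice 0 (fun _ : nat => True) (fun N n => N <= n /\ P (s n))
                (fun N _ => H N)) as [nx Hnx].
    pose (e := fix e k := match k with 0 => nx 0 | S k => nx (S (e k)) end).
    exists (fun k => s (e k)). split.
    + intros [|k] _; apply (Hnx _ I).
    + intros i j _ _ E. apply Hsi in E; auto.
      apply (chain_injective lt e PeanoNat.Nat.lt_irrefl PeanoNat.Nat.lt_trans); auto.
      intros k. apply (Hnx (S (e k)) I).
  - right. apply not_all_ex_not in H. destruct H as [N HN].
    exists (fun k => s (N + k)). split.
    + intros k _. destruct (Hs (N + k) I) as [h|h]; auto. exfalso. apply HN.
      exists (N + k). split; auto. apply PeanoNat.Nat.le_add_r.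
    + intros i j _ _ E. apply Hsi in E; auto. eapply PeanoNat.Nat.add_cancel_l; eauto.
Qed.

Lemma singleton_not_infinite {X : Type} (a : X) : ~ infinite (fun x => x = a).
Proof.
  intros [s [Hs Hsi]]. assert (H01 : 0 = 1).
  { apply Hsi; auto. rewrite (Hs 0 I), (Hs 1 I). reflexivity. }
  discriminate.
Qed.

Section WellOrder.
Variable T : Type.
Variable lt : T -> T -> Prop.
Hypothesis WO : strict_well_order lt.

Notation le := (Defs.le lt).

Lemma wo_irrefl x : ~ lt x x. Proof. apply WO. Qed.
Lemma wo_trans x y z : lt x y -> lt y z -> lt x z. Proof. apply WO. Qed.
Lemma wo_total x y : lt x y \/ x = y \/ lt y x. Proof. apply WO. Qed.
Lemma wo_wf : well_founded lt. Proof. apply WO. Qed.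

Lemma wo_le_refl x : le x x. Proof. right; reflexivity. Qed.
Lemma wo_lt_le_trans x y z : lt x y -> le y z -> lt x z.
Proof. intros H [H' | <-]; eauto using wo_trans. Qed.
Lemma wo_le_lt_trans x y z : le x y -> lt y z -> lt x z.
Proof. intros [H | ->] H'; eauto using wo_trans. Qed.
Lemma wo_le_trans x y z : le x y -> le y z -> le x z.
Proof. intros H [H' | <-]; [left; eauto using wo_le_lt_trans | exact H]. Qed.
Lemma wo_not_lt_le x y : ~ lt x y -> le y x.
Proof. intros H. destruct (wo_total x y) as [h|[h|h]]; [contradiction | right | left]; auto. Qed.
Lemma wo_le_not_lt x y : le x y -> ~ lt y x.
Proof. intros H H'. apply (wo_irrefl x). eauto using wo_le_lt_trans. Qed.

Lemma wo_least (P : T -> Prop) :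
  (exists x, P x) -> exists m, P m /\ forall y, P y -> le m y.
Proof.
  intros [x Hx]. induction x as [x IH] using (well_founded_induction wo_wf).
  destruct (classic (exists y, P y /\ lt y x)) as [[y [Hy Hyx]]|Hn].
  - exact (IH y Hyx Hy).
  - exists x. split; auto. intros y Hy. apply wo_not_lt_le. intros Hyx. eauto.
Qed.

Lemma wo_sup (P : T -> Prop) : (exists b, forall x, P x -> le x b) ->
  exists s, (forall x, P x -> le x s) /\ (forall b, (forall x, P x -> le x b) -> le s b).
Proof. intros H. destruct (wo_least _ H) as [s [Hs Hmin]]. exists s; split; auto. Qed.

Definition seg (a : T) : T -> Prop := fun x => lt x a.

Definition tmax (a b : T) : T := if excluded_middle_informative (lt a b) then b else a.

Lemma tmax_ge_l a b : le a (tmax a b).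
Proof. unfold tmax. destruct excluded_middle_informative; [left; auto | apply wo_le_refl]. Qed.
Lemma tmax_ge_r a b : le b (tmax a b).
Proof.
  unfold tmax. destruct excluded_middle_informative; [apply wo_le_refl | apply wo_not_lt_le; auto].
Qed.
Lemma tmax_lt a b c : lt a c -> lt b c -> lt (tmax a b) c.
Proof. unfold tmax. destruct excluded_middle_informative; auto. Qed.

Lemma seg_succ m v : is_succ lt m v -> forall x, lt x v <-> lt x m \/ x = m.
Proof.
  intros [Hmv Hs] x. split.
  - intros Hx. destruct (wo_total x m) as [h|[h|h]]; auto. exfalso.
    exact (wo_le_not_lt _ _ (Hs x h) Hx).
  - intros [h| ->]; eauto using wo_trans.
Qed.

Lemma infinite_of_no_max (P : T -> Prop) :
  (exists x, P x) -> (forall m, P m -> exists x, P x /\ lt m x) -> infinite P.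
Proof.
  intros [x0 Hx0] H.
  destruct (partial_choice x0 P (fun m x => P x /\ lt m x) H) as [nx Hnx].
  pose (s := fix s n := match n with 0 => x0 | S n => nx (s n) end).
  assert (HP : forall n, P (s n)).
  { induction n as [|n IH]; [exact Hx0 | apply (Hnx _ IH)]. }
  exists s. split; auto. intros i j _ _.
  apply (chain_injective lt s wo_irrefl wo_trans). intros n. apply (Hnx _ (HP n)).
Qed.

Lemma finite_has_max (P : T -> Prop) :
  ~ infinite P -> (exists x, P x) -> exists m, P m /\ forall x, P x -> le x m.
Proof.
  intros HF Hne. apply NNPP. intros Hn. apply HF. apply infinite_of_no_max; auto.
  intros m Hm. apply NNPP. intros Hm'. apply Hn. exists m. split; auto.
  intros x Hx. apply wo_not_lt_le. intros h. eauto.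
Qed.

Lemma infinite_seg_pred m v : is_succ lt m v -> infinite (seg v) -> infinite (seg m).
Proof.
  intros Hs HI.
  assert (HI' : infinite (fun x => lt x m \/ x = m)).
  { apply (infinite_incl (seg v)); [|exact HI]. intros x Hx. exact (proj1 (seg_succ m v Hs x) Hx). }
  destruct (infinite_or _ _ HI') as [h|h]; [exact h|].
  exfalso. exact (singleton_not_infinite m h).
Qed.

Lemma seg_succ_extend {X : Type} (Q : X -> Prop) m v (f : T -> X) q :
  is_succ lt m v -> Q q -> (forall x, lt x m -> Q (f x) /\ f x <> q) ->
  (forall x y, lt x m -> lt y m -> f x = f y -> x = y) -> injects (seg v) Q.
Proof.
  intros Hs Hq Hf Hfi.
  exists (fun x => if excluded_middle_informative (x = m) then q else f x). split.
  - intros x Hx. destruct excluded_middle_informative as [_|Hxm]; [exact Hq|].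
    apply Hf. destruct (proj1 (seg_succ m v Hs x) Hx); [assumption | contradiction].
  - intros x y Hx Hy. apply (seg_succ m v Hs) in Hx. apply (seg_succ m v Hs) in Hy.
    destruct (excluded_middle_informative (x = m)) as [->|Hxm];
    destruct (excluded_middle_informative (y = m)) as [->|Hym]; intros E; auto.
    + destruct Hy as [Hy| ->]; [|contradiction]. exfalso. exact (proj2 (Hf y Hy) (eq_sym E)).
    + destruct Hx as [Hx| ->]; [|contradiction]. exfalso. exact (proj2 (Hf x Hx) E).
    + destruct Hx as [Hx| ->], Hy as [Hy| ->]; try contradiction. exact (Hfi x y Hx Hy E).
Qed.

(* Hilbert's hotel: shift [e n] to [e (n+1)] to make room for [m] at [e 0]. *)
Lemma succ_seg_injects m v : is_succ lt m v -> infinite (seg m) -> injects (seg v) (seg m).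
Proof.
  intros Hs [e [He Hei]].
  pose (idx := fun x => epsilon (inhabits 0) (fun n => e n = x)).
  assert (Hidx : forall x, (exists n, e n = x) -> e (idx x) = x).
  { intros x Hx. exact (epsilon_spec (inhabits 0) (fun n => e n = x) Hx). }
  pose (shift := fun x =>
          if excluded_middle_informative (exists n, e n = x) then e (S (idx x)) else x).
  apply (seg_succ_extend (seg m) m v shift (e 0) Hs (He 0 I)).
  - intros x Hx. unfold shift. destruct excluded_middle_informative as [Hr|Hr]; split.
    + apply He; auto.
    + intros E. apply Hei in E; auto. discriminate.
    + exact Hx.
    + intros ->. apply Hr. eauto.
  - intros x y _ _. unfold shift.
    destruct (excluded_middle_informative (exists n, e n = x)) as [Hrx|Hrx];
    destruct (excluded_middle_informative (exists n, e n = y)) as [Hry|Hry]; intros E.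
    + apply Hei in E; auto. injection E as E.
      rewrite <- (Hidx x Hrx), <- (Hidx y Hry), E. reflexivity.
    + exfalso. apply Hry. eauto.
    + exfalso. apply Hrx. eauto.
    + exact E.
Qed.

Lemma finite_seg_injects {X : Type} (Q : X -> Prop) c :
  ~ infinite (seg c) -> infinite Q -> injects (seg c) Q.
Proof.
  revert X Q. induction c as [c IH] using (well_founded_induction wo_wf).
  intros X Q HF HQ.
  destruct (classic (exists x, lt x c)) as [Hne|Hemp].
  2:{ destruct HQ as [e [He _]]. exists (fun _ => e 0). split.
      - intros x Hx. exfalso. eauto.
      - intros x y Hx. exfalso. eauto. }
  destruct (classic (exists m, is_succ lt m c)) as [[m Hs]|Hlim].
  2:{ exfalso. apply HF. apply infinite_of_no_max; auto. intros m Hm.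
      apply NNPP. intros Hn. apply Hlim. exists m. split; auto. intros g Hg.
      apply wo_not_lt_le. intros Hgc. apply Hn. exists g. split; auto. }
  assert (HFm : ~ infinite (seg m)).
  { intros h. apply HF. apply (infinite_incl (seg m)); [|exact h].
    intros x hx. exact (wo_trans _ _ _ hx (proj1 Hs)). }
  destruct (IH m (proj1 Hs) X Q HFm HQ) as [f [Hf Hfi]].
  destruct HQ as [e [He Hei]].
  assert (Hfresh : exists n, ~ exists x, lt x m /\ f x = e n).
  { apply NNPP. intros Hn. apply HFm.
    assert (Hall : forall n, exists x, lt x m /\ f x = e n).
    { intros n. apply NNPP. intros h. apply Hn. eauto. }
    destruct (Hall 0) as [x0 [Hx0 _]].
    apply (infinite_injects (fun y => exists x, lt x m /\ f x = y)).
    - exists e. split; [intros n _; apply Hall | intros i j _ _; apply Hei; auto].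
    - apply (injects_of_surj (seg m) _ f); [exists x0; exact Hx0 | intros y [x [hx E]]; eauto]. }
  destruct Hfresh as [n Hn].
  apply (seg_succ_extend Q m c f (e n) Hs (He n I)); [|exact Hfi].
  intros x Hx. split; [exact (Hf x Hx) | intros E; apply Hn; eauto].
Qed.

Lemma finite_square (P : T -> Prop) b :
  (forall x, P x -> lt x b) -> ~ infinite P -> ~ infinite (prod_pred P P).
Proof.
  revert P. induction b as [b IH] using (well_founded_induction wo_wf).
  intros P Hb HF HI.
  destruct (classic (exists x, P x)) as [Hne|He].
  2:{ destruct HI as [s [Hs _]]. apply He. exists (fst (s 0)). apply (Hs 0 I). }
  destruct (finite_has_max P HF Hne) as [m [Hm Hmax]].
  pose (P' := fun x => P x /\ lt x m).
  assert (HF' : ~ infinite P').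
  { intros h. apply HF. apply (infinite_incl P'); [intros x [hx _]; exact hx | exact h]. }
  assert (HF2 := IH m (Hb m Hm) P' (fun x hx => proj2 hx) HF').
  assert (Hcov : forall p, prod_pred P P p ->
    (prod_pred P' P' p \/ (P (snd p) /\ fst p = m)) \/ (P (fst p) /\ snd p = m)).
  { intros [a c] [Ha Hc]. unfold prod_pred, P'; simpl in *.
    destruct (Hmax a Ha) as [h1| ->]; destruct (Hmax c Hc) as [h2| ->]; auto. }
  destruct (infinite_or _ _ (infinite_incl _ _ Hcov HI)) as [h|h].
  - destruct (infinite_or _ _ h) as [h'|h']; [contradiction|].
    apply HF. apply (infinite_injects _ _ h'). exists snd. split; [intros p [hp _]; exact hp|].
    intros [a1 c1] [a2 c2] [_ e1] [_ e2] E; simpl in *; subst; reflexivity.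
  - apply HF. apply (infinite_injects _ _ h). exists fst. split; [intros p [hp _]; exact hp|].
    intros [a1 c1] [a2 c2] [_ e1] [_ e2] E; simpl in *; subst; reflexivity.
Qed.

Section Collapse.
Variable Q : Type.
Variable R : Q -> Q -> Prop.
Hypothesis R_wf : well_founded R.
Variable t0 : T.

(* [collapse p] is the least value not taken by [collapse] below [p] ([t0] if there is none). *)
Definition collapse_step (p : Q) (rec : forall q, R q p -> T) : T :=
  epsilon (inhabits t0) (fun o => (~ exists q (H : R q p), rec q H = o) /\
     forall o', (~ exists q (H : R q p), rec q H = o') -> le o o').

Definition collapse : Q -> T := Fix R_wf (fun _ => T) collapse_step.

Definition taken_below (p : Q) (o : T) : Prop := exists q, R q p /\ collapse q = o.

Lemma collapse_unfold p : collapse p = collapse_step p (fun q _ => collapse q).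
Proof.
  apply (Fix_eq R_wf (fun _ => T) collapse_step). intros x f g H.
  replace g with f; [reflexivity|].
  apply functional_extensionality_dep; intros y. apply functional_extensionality_dep; auto.
Qed.

Lemma collapse_least p : (exists o, ~ taken_below p o) ->
  ~ taken_below p (collapse p) /\ forall o, ~ taken_below p o -> le (collapse p) o.
Proof.
  intros Hr.
  assert (E : forall o, (exists q (H : R q p), collapse q = o) <-> taken_below p o).
  { intros o. split; [intros [q [H e]] | intros [q [H e]]]; exists q; eauto. }
  rewrite collapse_unfold. unfold collapse_step.
  destruct (epsilon_spec (inhabits t0) (fun o => (~ exists q (H : R q p), collapse q = o) /\
     forall o', (~ exists q (H : R q p), collapse q = o') -> le o o')) as [S1 S2].
  - destruct (wo_least (fun o => ~ taken_below p o) Hr) as [m [Hm Hmin]].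
    exists m. split; [rewrite E; exact Hm|]. intros o' h. apply Hmin. rewrite <- E. exact h.
  - split; [rewrite <- E; exact S1|]. intros o' h. apply S2. rewrite E. exact h.
Qed.

Hypothesis R_trans : forall a b c, R a b -> R b c -> R a c.

Lemma taken_below_iff p : (exists o, ~ taken_below p o) ->
  forall x, taken_below p x <-> lt x (collapse p).
Proof.
  induction p as [p IH] using (well_founded_induction R_wf).
  intros Hr. destruct (collapse_least p Hr) as [S1 S2]. intros x. split.
  - intros [q [Hq <-]]. apply NNPP. intros Hn. apply wo_not_lt_le in Hn.
    destruct Hn as [h|h].
    + assert (Hrq : exists o, ~ taken_below q o).
      { destruct Hr as [o Ho]. exists o. intros [q' [H1 H2]]. apply Ho. exists q'. eauto. }
      destruct (proj2 (IH q Hq Hrq (collapse p)) h) as [q' [H1 H2]].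
      apply S1. exists q'. eauto.
    + apply S1. exists q. auto.
  - intros Hx. apply NNPP. intros Hn. exact (wo_le_not_lt _ _ (S2 x Hn) Hx).
Qed.

Lemma collapse_lt p q : (exists o, ~ taken_below p o) -> R q p -> lt (collapse q) (collapse p).
Proof. intros Hr H. apply (taken_below_iff p Hr). exists q. auto. Qed.

Lemma collapse_injects (P : Q -> Prop) v :
  (forall p q, P p -> P q -> p <> q -> R p q \/ R q p) ->
  (forall p, P p -> exists o, lt o v /\ ~ taken_below p o) -> injects P (seg v).
Proof.
  intros Htot Hroom. exists collapse. split.
  - intros p Hp. destruct (Hroom p Hp) as [o [Ho Hno]].
    exact (wo_le_lt_trans _ _ _ (proj2 (collapse_least p (ex_intro _ o Hno)) o Hno) Ho).
  - intros p q Hp Hq E. apply NNPP. intros Hne.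
    destruct (Htot p q Hp Hq Hne) as [h|h].
    + destruct (Hroom q Hq) as [o [_ Hno]].
      apply (wo_irrefl (collapse q)). rewrite <- E at 1.
      exact (collapse_lt q p (ex_intro _ o Hno) h).
    + destruct (Hroom p Hp) as [o [_ Hno]].
      apply (wo_irrefl (collapse p)). rewrite E at 1. exact (collapse_lt p q (ex_intro _ o Hno) h).
Qed.

End Collapse.

Lemma bounded_equipotent_seg (Y : T -> Prop) :
  (exists b, forall y, Y y -> lt y b) -> exists o, injects Y (seg o) /\ injects (seg o) Y.
Proof.
  intros [b Hb].
  pose (R := fun q p => lt q p /\ Y q).
  assert (R_wf : well_founded R).
  { intros a. induction a as [a IH] using (well_founded_induction wo_wf).
    constructor. intros y [Hy _]. auto. }
  assert (R_trans : forall a b c, R a b -> R b c -> R a c).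
  { intros x y z [H1 H2] [H3 H4]. split; eauto using wo_trans. }
  pose (c := collapse T R R_wf b).
  assert (Hc : forall p, (exists o, ~ taken_below T R R_wf b p o) /\ le (c p) p).
  { intros p. induction p as [p IH] using (well_founded_induction wo_wf).
    assert (Hp : ~ taken_below T R R_wf b p p).
    { intros [q [[Hq _] E]]. destruct (IH q Hq) as [_ Hle]. fold c in E. rewrite E in Hle.
      exact (wo_le_not_lt _ _ Hle Hq). }
    split; [exists p; exact Hp|].
    exact (proj2 (collapse_least T R R_wf b p (ex_intro _ p Hp)) p Hp). }
  pose (Img := fun o => exists y, Y y /\ c y = o).
  assert (Hb' : ~ Img b).
  { intros [y [Hy E]]. destruct (Hc y) as [_ Hle]. rewrite E in Hle.
    exact (wo_le_not_lt _ _ Hle (Hb y Hy)). }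
  destruct (wo_least (fun o => ~ Img o) (ex_intro _ b Hb')) as [o [Ho Hmin]].
  assert (Hseg : forall x, lt x o -> Img x).
  { intros x Hx. apply NNPP. intros Hn. exact (wo_le_not_lt _ _ (Hmin x Hn) Hx). }
  exists o. split.
  - apply (collapse_injects T R R_wf b R_trans Y o).
    + intros x y Hx Hy Hne.
      destruct (wo_total x y) as [h|[h|h]]; [left | contradiction | right]; split; auto.
    + intros y Hy. destruct (Hc y) as [Hr _]. exists (c y).
      split; [|exact (proj1 (collapse_least T R R_wf b y Hr))].
      apply NNPP. intros Hn. apply wo_not_lt_le in Hn. destruct Hn as [h|h].
      * destruct (proj2 (taken_below_iff T R R_wf b R_trans y Hr o) h) as [q [[_ Hq] E]].
        apply Ho. exists q. auto.
      * apply Ho. exists y. auto.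
  - destruct (classic (exists y, Y y)) as [Hne|He].
    + apply (injects_of_surj Y (seg o) c Hne). intros x Hx. exact (Hseg x Hx).
    + exists (fun x => x). split; [|auto]. intros x Hx. exfalso.
      destruct (Hseg x Hx) as [y [Hy _]]. eauto.
Qed.

Definition pair_max (p : T * T) : T := tmax (fst p) (snd p).

Definition godel_lt (p q : T * T) : Prop :=
  lt (pair_max p) (pair_max q) \/
  (pair_max p = pair_max q /\ (lt (fst p) (fst q) \/ (fst p = fst q /\ lt (snd p) (snd q)))).

Lemma godel_wf : well_founded godel_lt.
Proof.
  intros [a b]. remember (tmax a b) as M eqn:HM. revert a b HM.
  induction M as [M IHM] using (well_founded_induction wo_wf).
  intros a. induction a as [a IHa] using (well_founded_induction wo_wf).
  intros b. induction b as [b IHb] using (well_founded_induction wo_wf).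
  intros HM. constructor. intros [c d] HG. unfold godel_lt, pair_max in HG; simpl in HG.
  rewrite <- HM in HG. destruct HG as [H|[H1 [H2|[<- H3]]]].
  - exact (IHM _ H c d eq_refl).
  - exact (IHa c H2 d (eq_sym H1)).
  - exact (IHb d H3 (eq_sym H1)).
Qed.

Lemma godel_trans p q r : godel_lt p q -> godel_lt q r -> godel_lt p r.
Proof.
  unfold godel_lt. intros [H|[H1 H2]] [H'|[H1' H2']].
  - left; eauto using wo_trans.
  - left. rewrite <- H1'. exact H.
  - left. rewrite H1. exact H'.
  - right. split; [congruence|].
    destruct H2 as [h|[h h']]; destruct H2' as [g|[g g']].
    + left; eauto using wo_trans.
    + left; rewrite <- g; exact h.
    + left; rewrite h; exact g.
    + right; split; [congruence | eauto using wo_trans].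
Qed.

Lemma godel_total p q : p <> q -> godel_lt p q \/ godel_lt q p.
Proof.
  intros Hne. unfold godel_lt.
  destruct (wo_total (pair_max p) (pair_max q)) as [h|[h|h]]; auto.
  destruct (wo_total (fst p) (fst q)) as [h1|[h1|h1]]; auto.
  destruct (wo_total (snd p) (snd q)) as [h2|[h2|h2]]; auto 6.
  exfalso. apply Hne. destruct p, q; simpl in *; subst; reflexivity.
Qed.

Lemma godel_lt_bound q p : godel_lt q p -> le (fst q) (pair_max p) /\ le (snd q) (pair_max p).
Proof.
  intros HG. assert (H1 := tmax_ge_l (fst q) (snd q)). assert (H2 := tmax_ge_r (fst q) (snd q)).
  fold (pair_max q) in H1, H2. destruct HG as [H|[<- _]].
  - split; left; eapply wo_le_lt_trans; eauto.
  - auto.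
Qed.

Lemma seg_limit_of_initial v : infinite (seg v) ->
  ~ (exists u, lt u v /\ injects (seg v) (seg u)) ->
  forall m, lt m v -> exists m', lt m m' /\ lt m' v.
Proof.
  intros HI Hcard m Hm. apply NNPP. intros Hn.
  assert (Hs : is_succ lt m v).
  { split; auto. intros g Hg. apply wo_not_lt_le. intros Hgv. apply Hn. eauto. }
  apply Hcard. exists m. split; auto.
  exact (succ_seg_injects m v Hs (infinite_seg_pred m v Hs HI)).
Qed.

(* At an initial ordinal [v], the pairs below any pair [p] fit into a square [m' * m'] with
   [m' < v], which is smaller than [v]; so the collapse of the Goedel order stays below [v]. *)
Lemma initial_seg_square_injects v : infinite (seg v) ->
  ~ (exists u, lt u v /\ injects (seg v) (seg u)) ->
  (forall u, lt u v -> infinite (seg u) -> injects (prod_pred (seg u) (seg u)) (seg u)) ->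
  injects (prod_pred (seg v) (seg v)) (seg v).
Proof.
  intros HI Hcard IH.
  assert (Hlim := seg_limit_of_initial v HI Hcard).
  assert (Ht0 : exists t0, lt t0 v) by (destruct HI as [e [He _]]; exists (e 0); apply He; auto).
  destruct Ht0 as [t0 Ht0].
  pose (pairs := prod_pred (seg v) (seg v)).
  pose (R := fun q p => godel_lt q p /\ pairs q).
  assert (R_wf : well_founded R).
  { intros a. induction a as [a IH'] using (well_founded_induction godel_wf).
    constructor. intros y [Hy _]. auto. }
  assert (R_trans : forall a b c, R a b -> R b c -> R a c).
  { intros a b c [H1 H2] [H3 _]. split; eauto using godel_trans. }
  apply (collapse_injects _ R R_wf t0 R_trans pairs v).
  - intros p q Hp Hq Hne. destruct (godel_total p q Hne); [left | right]; split; auto.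
  - intros p Hp. apply NNPP. intros Hn.
    assert (Hall : forall o, lt o v -> taken_below _ R R_wf t0 p o).
    { intros o Ho. apply NNPP. intros h. apply Hn. eauto. }
    assert (Hm : lt (pair_max p) v) by (apply tmax_lt; apply Hp).
    destruct (Hlim _ Hm) as [m' [Hmm' Hm'v]].
    assert (Hin : injects (seg v) (prod_pred (seg m') (seg m'))).
    { apply (injects_subr _ (fun q => R q p)).
      - intros q [Hg _]. destruct (godel_lt_bound q p Hg) as [b1 b2].
        split; eapply wo_le_lt_trans; eauto.
      - apply (injects_of_surj _ (seg v) (collapse _ R R_wf t0)).
        + destruct (Hall t0 Ht0) as [q [Hq _]]. eauto.
        + intros o Ho. destruct (Hall o Ho) as [q [Hq E]]. eauto. }
    destruct (classic (infinite (seg m'))) as [Hi|Hi].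
    + apply Hcard. exists m'. split; auto. exact (injects_trans _ _ _ Hin (IH m' Hm'v Hi)).
    + exact (finite_square (seg m') m' (fun x h => h) Hi (infinite_injects _ _ HI Hin)).
Qed.

Lemma seg_square_injects v : infinite (seg v) -> injects (prod_pred (seg v) (seg v)) (seg v).
Proof.
  induction v as [v IH] using (well_founded_induction wo_wf). intros HI.
  destruct (classic (exists u, lt u v /\ injects (seg v) (seg u))) as [[u [Huv Hvu]]|Hcard].
  - apply (injects_trans _ _ _ (injects_prod _ _ _ _ Hvu Hvu)).
    apply (injects_trans _ (seg u)); [exact (IH u Huv (infinite_injects _ _ HI Hvu))|].
    apply injects_incl. intros x hx. exact (wo_trans _ _ _ hx Huv).
  - exact (initial_seg_square_injects v HI Hcard IH).
Qed.

Lemma square_injects {X : Type} (P : X -> Prop) b :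
  infinite P -> injects P (seg b) -> injects (prod_pred P P) P.
Proof.
  intros HI [f [Hf Hfi]].
  pose (Y := fun y => exists x, P x /\ f x = y).
  destruct (bounded_equipotent_seg Y) as [o [HYo HoY]].
  { exists b. intros y [x [hx <-]]. exact (Hf x hx). }
  assert (HPY : injects P Y) by (exists f; split; [intros x hx; exists x; auto | exact Hfi]).
  assert (HYP : injects Y P).
  { destruct HI as [e [He _]].
    apply (injects_of_surj P Y f); [exists (e 0); auto | intros y [x [hx E]]; eauto]. }
  assert (HPo := injects_trans _ _ _ HPY HYo).
  assert (HoP := injects_trans _ _ _ HoY HYP).
  apply (injects_trans _ _ _ (injects_prod _ _ _ _ HPo HPo)).
  exact (injects_trans _ _ _ (seg_square_injects o (infinite_injects _ _ HI HPo)) HoP).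
Qed.

Lemma restrict_restrict (X : T -> Prop) a b :
  le a b -> restrict lt (restrict lt X b) a = restrict lt X a.
Proof.
  intros H. apply functional_extensionality; intros x. apply propositional_extensionality.
  unfold restrict. split; [intros [[h1 _] h3]; auto | intros [h1 h3]; repeat split; auto].
  exact (wo_lt_le_trans _ _ _ h3 H).
Qed.

Definition trace_union (Node : T -> (T -> Prop) -> Prop) (x : T) : Prop :=
  exists e E, Node e E /\ lt x e /\ E x.

Lemma trace_union_agrees (Node : T -> (T -> Prop) -> Prop) :
  (forall e E e' E', Node e E -> Node e' E' -> le e e' -> E = restrict lt E' e) ->
  forall e E x, Node e E -> lt x e -> (trace_union Node x <-> E x).
Proof.
  intros Hcoh e E x HN Hx. split; [|intros HE; exists e, E; auto].
  intros [e' [E' [HN' [Hx' HE']]]].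
  destruct (wo_total e e') as [h|[<-|h]].
  - rewrite (Hcoh e E e' E' HN HN' (or_introl h)). split; assumption.
  - rewrite (Hcoh e E e E' HN HN' (wo_le_refl e)). split; assumption.
  - rewrite (Hcoh e' E' e E HN' HN (or_introl h)) in HE'. exact (proj1 HE').
Qed.

Lemma succ_seg_injects_infinite {X : Type} (W : X -> Prop) m v :
  is_succ lt m v -> infinite W -> injects (seg m) W -> injects (seg v) W.
Proof.
  intros Hs HW Hm. destruct (classic (infinite (seg m))) as [Hi|Hi].
  - exact (injects_trans _ _ _ (succ_seg_injects m v Hs Hi) Hm).
  - apply finite_seg_injects; [|exact HW]. intros h. exact (Hi (infinite_seg_pred m v Hs h)).
Qed.

(* If [W] absorbs its square, a union of [|P|] segments each injecting into [W] cannot cover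
   [rho] unless [rho] itself injects into [W]. *)
Lemma bounded_of_absorbing {X Y : Type} (P : X -> Prop) (W : Y -> Prop) (g : X -> T) rho :
  injects (prod_pred W W) W -> injects P W -> ~ injects (seg rho) W -> (exists z, lt z rho) ->
  (forall x, P x -> lt (g x) rho /\ injects (seg (g x)) W) ->
  exists z, lt z rho /\ forall x, P x -> le (g x) z.
Proof.
  intros Hsq [f0 [Hf0 Hf0i]] Hrho [z0 Hz0] Hg. apply NNPP. intros Hn.
  assert (Hunb : forall z, lt z rho -> exists x, P x /\ lt z (g x)).
  { intros z Hz. apply NNPP. intros H1. apply Hn. exists z. split; auto. intros x Hx.
    apply wo_not_lt_le. intros h. eauto. }
  destruct (Hunb z0 Hz0) as [x0 [Hx0 _]].
  destruct (partial_choice x0 (seg rho) (fun z x => P x /\ lt z (g x)) Hunb) as [Ef HEf].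
  destruct (partial_choice (fun _ => f0 x0) P
              (fun x k => (forall z, lt z (g x) -> W (k z)) /\
                          (forall z z', lt z (g x) -> lt z' (g x) -> k z = k z' -> z = z'))
              (fun x Hx => proj2 (Hg x Hx))) as [kf Hkf].
  apply Hrho. apply (injects_trans _ (prod_pred W W)); [|exact Hsq].
  exists (fun z => (f0 (Ef z), kf (Ef z) z)). split.
  - intros z Hz. destruct (HEf z Hz) as [HP Hlt]. split; simpl.
    + exact (Hf0 _ HP).
    + exact (proj1 (Hkf _ HP) z Hlt).
  - intros z z' Hz Hz' E. injection E as E1 E2.
    destruct (HEf z Hz) as [HPz Hltz]. destruct (HEf z' Hz') as [HPz' Hltz'].
    apply Hf0i in E1; auto. rewrite <- E1 in E2, Hltz'.
    exact (proj2 (Hkf _ HPz) z z' Hltz Hltz' E2).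
Qed.

Section Regular.
Hypothesis Hreg : regular_uncountable_cardinal lt.

(* [|P| < λ] in the weak form that regularity needs: [T] does not inject into [P]. *)
Definition small {X : Type} (P : X -> Prop) : Prop := ~ injects (fun _ : T => True) P.

Lemma T_inhabited : inhabited T.
Proof.
  apply NNPP. intros Hn. destruct Hreg as [_ [_ [_ Hunc]]]. apply Hunc.
  exists (fun t => False_rect nat (Hn (inhabits t))). intros a. exfalso. exact (Hn (inhabits a)).
Qed.

Lemma small_injects {X Y : Type} (P : X -> Prop) (Q : Y -> Prop) :
  injects P Q -> small Q -> small P.
Proof. intros H HQ HP. exact (HQ (injects_trans _ _ _ HP H)). Qed.

Lemma small_bounded (P : T -> Prop) : small P -> exists b, forall a, P a -> lt a b.
Proof.
  intros HP. destruct Hreg as [_ [_ [Hb _]]]. apply Hb. split.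
  - exists (@proj1_sig T P). intros [a ha] [b hb] E. simpl in E. subst.
    f_equal. apply proof_irrelevance.
  - intros [g Hg]. apply HP. exists (fun t => proj1_sig (g t)). split.
    + intros t _. exact (proj2_sig (g t)).
    + intros x y _ _ E. apply Hg. destruct (g x) as [a ha], (g y) as [b hb]. simpl in E. subst.
      f_equal. apply proof_irrelevance.
Qed.

Lemma small_image_bounded {X : Type} (Q : X -> Prop) (g : X -> T) :
  small Q -> exists b, forall x, Q x -> lt (g x) b.
Proof.
  intros HQ. destruct (classic (exists x, Q x)) as [Hne|He].
  - destruct (small_bounded (fun y => exists x, Q x /\ g x = y)) as [b Hb].
    + apply (small_injects _ Q); [|exact HQ].
      apply (injects_of_surj Q _ g Hne). intros y [x [hx e]]. eauto.
    + exists b. intros x Hx. apply Hb. exists x. auto.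
  - destruct T_inhabited as [t0]. exists t0. intros x Hx. exfalso. eauto.
Qed.

Lemma small_seg a : small (seg a).
Proof.
  intros [f [Hf Hfi]]. destruct Hreg as [_ [Hcard _]]. destruct (Hcard a) as [_ Hn]. apply Hn.
  exists (fun t => exist _ (f t) (Hf t I)). intros x y E. apply Hfi; auto.
  exact (f_equal (@proj1_sig _ _) E).
Qed.

Lemma small_nat : small (fun _ : nat => True).
Proof.
  intros [f [_ Hfi]]. destruct Hreg as [_ [_ [_ Hunc]]]. apply Hunc.
  exists f. intros a b. apply Hfi; auto.
Qed.

Lemma wo_unbounded x : exists y, lt x y.
Proof.
  destruct (small_bounded (fun y => y = x)) as [b Hb].
  - apply (small_injects _ (fun _ : nat => True)); [|exact small_nat].
    exists (fun _ => 0). split; auto. intros a c -> -> _. reflexivity.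
  - exists b. auto.
Qed.

Lemma small_le x : small (fun y => le y x).
Proof.
  destruct (wo_unbounded x) as [y Hy]. apply (small_injects _ (seg y)); [|exact (small_seg y)].
  apply injects_incl. intros z hz. exact (wo_le_lt_trans _ _ _ hz Hy).
Qed.

Lemma unbounded_fiber {Y : Type} (P : T -> Prop) (F : T -> Y) (Q : Y -> Prop) :
  small Q -> (forall g, exists a, P a /\ lt g a) -> (forall a, P a -> Q (F a)) ->
  exists y, Q y /\ forall g, exists a, P a /\ lt g a /\ F a = y.
Proof.
  intros HQ Hunb HPQ. apply NNPP. intros Hn.
  assert (H : forall y, Q y -> exists g, forall a, P a -> F a = y -> le a g).
  { intros y Hy. apply NNPP. intros Hn2. apply Hn. exists y. split; auto.
    intros g. apply NNPP. intros Hn3. apply Hn2. exists g. intros a Ha E.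
    apply wo_not_lt_le. intros h. eauto. }
  destruct T_inhabited as [t0].
  destruct (partial_choice t0 Q _ H) as [bnd Hbnd].
  destruct (small_image_bounded Q bnd HQ) as [b Hb].
  destruct (Hunb b) as [a [Ha Hba]].
  apply (wo_le_not_lt _ _ (Hbnd (F a) (HPQ a Ha) a Ha eq_refl)).
  exact (wo_trans _ _ _ (Hb _ (HPQ a Ha)) Hba).
Qed.

Section Thread.
Variable K : Type.
Variable Cs : T -> (T -> Prop) -> Prop.
Variable A : T -> Prop.
Hypothesis HK : card_lt K T.
Hypothesis HC : coherent_seq lt K Cs.
Hypothesis HA_unbounded : forall g, exists a, A a /\ le g a.
Hypothesis HA_covered :
  forall a, A a -> exists C, Cs a C /\ (forall b, A b -> lt b a -> C b).

Lemma small_K : small (fun _ : K => True).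
Proof.
  intros [f [_ Hfi]]. destruct HK as [_ Hn]. apply Hn. exists f. intros a b. apply Hfi; auto.
Qed.

Lemma Cs_injects_K a : injects (Cs a) (fun _ : K => True).
Proof.
  destruct HC as [Hne [_ [Hw _]]]. destruct (Hw a) as [[f Hf] _]. destruct (Hne a) as [C0 H0].
  exists (fun C => match excluded_middle_informative (Cs a C) with
                   | left h => f (exist _ C h) | right _ => f (exist _ C0 H0) end).
  split; auto. intros x y Hx Hy.
  destruct (excluded_middle_informative (Cs a x)); [|contradiction].
  destruct (excluded_middle_informative (Cs a y)); [|contradiction].
  intros E. exact (f_equal (@proj1_sig _ _) (Hf _ _ E)).
Qed.

Lemma K_not_injects_Cs a : ~ injects (fun _ : K => True) (Cs a).
Proof.
  destruct HC as [_ [_ [Hw _]]]. destruct (Hw a) as [_ Hn]. intros [f [Hf Hfi]]. apply Hn.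
  exists (fun k => exist _ (f k) (Hf k I)). intros x y E. apply Hfi; auto.
  exact (f_equal (@proj1_sig _ _) E).
Qed.

Lemma small_Cs a : small (Cs a).
Proof. exact (small_injects _ _ (Cs_injects_K a) small_K). Qed.

Lemma A_above g : exists a, A a /\ lt g a.
Proof.
  destruct (wo_unbounded g) as [y Hy]. destruct (HA_unbounded y) as [a [Ha Hle]].
  exists a. split; auto. exact (wo_lt_le_trans _ _ _ Hy Hle).
Qed.

Lemma A_above_both b c : exists a, A a /\ lt b a /\ lt c a.
Proof.
  destruct (A_above (tmax b c)) as [a [Ha Hl]]. exists a. split; [exact Ha|].
  split; [exact (wo_le_lt_trans _ _ _ (tmax_ge_l b c) Hl) |
           exact (wo_le_lt_trans _ _ _ (tmax_ge_r b c) Hl)].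
Qed.

Definition chosen_club (a : T) : T -> Prop :=
  epsilon (inhabits (fun _ : T => False)) (fun C => Cs a C /\ forall b, A b -> lt b a -> C b).

Lemma chosen_club_spec a :
  A a -> Cs a (chosen_club a) /\ forall b, A b -> lt b a -> chosen_club a b.
Proof. intros Ha. unfold chosen_club. apply epsilon_spec. exact (HA_covered a Ha). Qed.

Definition cofinal_trace (e : T) (E : T -> Prop) : Prop :=
  forall g, exists a, A a /\ lt g a /\ lt e a /\ E = restrict lt (chosen_club a) e.

Lemma acc_chosen_club e a : acc lt A e -> A a -> lt e a -> acc lt (chosen_club a) e.
Proof.
  intros [_ He] Ha Hea. destruct (chosen_club_spec a Ha) as [HCs Hsub]. split.
  - destruct HC as [_ [Hclub _]]. destruct (Hclub a _ HCs) as [_ [Hunb _]]. exact (Hunb e Hea).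
  - intros g Hg. destruct (He g Hg) as [b [Hb [h1 h2]]]. exists b.
    split; [apply Hsub; eauto using wo_trans | auto].
Qed.

Lemma trace_Cs e a : acc lt A e -> A a -> lt e a -> Cs e (restrict lt (chosen_club a) e).
Proof.
  intros He Ha Hea. destruct HC as [_ [_ [_ [_ Hcoh]]]].
  exact (Hcoh a _ e (proj1 (chosen_club_spec a Ha)) (acc_chosen_club e a He Ha Hea)).
Qed.

Lemma cofinal_trace_Cs e E : acc lt A e -> cofinal_trace e E -> Cs e E.
Proof. intros He HU. destruct (HU e) as [a [Ha [_ [Hea ->]]]]. exact (trace_Cs e a He Ha Hea). Qed.

Lemma cofinal_trace_restrict_self e E : cofinal_trace e E -> restrict lt E e = E.
Proof.
  intros HU. destruct (HU e) as [a [_ [_ [_ ->]]]]. apply restrict_restrict. apply wo_le_refl.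
Qed.

Lemma cofinal_trace_restrict e e' E :
  le e e' -> cofinal_trace e' E -> cofinal_trace e (restrict lt E e).
Proof.
  intros H HU g. destruct (HU g) as [a [Ha [h1 [h2 ->]]]]. exists a.
  repeat split; auto; [exact (wo_le_lt_trans _ _ _ H h2) | apply restrict_restrict; exact H].
Qed.

Lemma cofinal_trace_exists e : acc lt A e -> exists E, cofinal_trace e E.
Proof.
  intros He.
  destruct (unbounded_fiber (fun a => A a /\ lt e a) (fun a => restrict lt (chosen_club a) e)
              (Cs e) (small_Cs e)) as [E [_ Hunb]].
  - intros g. destruct (A_above_both g e) as [a [Ha [h1 h2]]]. exists a. auto.
  - intros a [Ha h]. exact (trace_Cs e a He Ha h).
  - exists E. intros g. destruct (Hunb g) as [a [[Ha h1] [h2 <-]]]. exists a. auto.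
Qed.

Lemma cofinal_trace_extend e e' E : acc lt A e' -> le e e' -> cofinal_trace e E ->
  exists E', cofinal_trace e' E' /\ restrict lt E' e = E.
Proof.
  intros He' [Hee' | <-] HU.
  2:{ exists E. split; [exact HU | exact (cofinal_trace_restrict_self e E HU)]. }
  destruct (unbounded_fiber (fun a => A a /\ lt e' a /\ restrict lt (chosen_club a) e = E)
              (fun a => restrict lt (chosen_club a) e') (Cs e') (small_Cs e')) as [E' [_ Hunb]].
  - intros g. destruct (HU (tmax g e')) as [a [Ha [h1 [_ E1]]]]. exists a. repeat split; auto.
    + exact (wo_le_lt_trans _ _ _ (tmax_ge_r g e') h1).
    + exact (wo_le_lt_trans _ _ _ (tmax_ge_l g e') h1).
  - intros a [Ha [h _]]. exact (trace_Cs e' a He' Ha h).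
  - exists E'. split.
    + intros g. destruct (Hunb g) as [a [[Ha [h1 _]] [h2 <-]]]. exists a. auto.
    + destruct (Hunb e) as [a [[_ [h1 <-]] [_ <-]]]. apply restrict_restrict. left. exact Hee'.
Qed.

Lemma cofinal_traces_injects e e' :
  acc lt A e' -> le e e' -> injects (cofinal_trace e) (cofinal_trace e').
Proof.
  intros He' Hee'.
  destruct (partial_choice (fun _ : T => False) (cofinal_trace e)
              (fun E E' => cofinal_trace e' E' /\ restrict lt E' e = E)
              (fun E HE => cofinal_trace_extend e e' E He' Hee' HE)) as [f Hf].
  exists f. split; [intros E HE; apply Hf; exact HE|].
  intros x y Hx Hy E. destruct (Hf x Hx) as [_ <-]. destruct (Hf y Hy) as [_ <-].
  rewrite E. reflexivity.
Qed.

Lemma cofinal_traces_injects_Cs e : acc lt A e -> injects (cofinal_trace e) (Cs e).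
Proof. intros He. apply injects_incl. intros E. exact (cofinal_trace_Cs e E He). Qed.

Lemma K_injects_seg : exists b, injects (fun _ : K => True) (seg b).
Proof.
  destruct HK as [[fK HfK] _].
  destruct (small_image_bounded (fun _ : K => True) fK small_K) as [b Hb]. exists b.
  exists fK. split; [intros k _; exact (Hb k I) | intros x y _ _; apply HfK].
Qed.

Lemma cofinal_traces_injects_seg e : acc lt A e -> exists b, injects (cofinal_trace e) (seg b).
Proof.
  intros He. destruct K_injects_seg as [b Hb]. exists b.
  apply (injects_trans _ _ _ (cofinal_traces_injects_Cs e He)).
  exact (injects_trans _ _ _ (Cs_injects_K e) Hb).
Qed.

Lemma A_above_image (h : T -> T) s : exists a, A a /\ lt s a /\ forall y, le y s -> lt (h y) a.
Proof.
  destruct (small_image_bounded _ h (small_le s)) as [b Hb].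
  destruct (A_above_both b s) as [a [Ha [Hba Hsa]]]. exists a.
  split; [exact Ha | split; [exact Hsa | intros y Hy; exact (wo_trans _ _ _ (Hb y Hy) Hba)]].
Qed.

Lemma A_sequence_above {Ix : Type} (R : Ix -> Ix -> Prop) (F : T -> T) (e1 : T) :
  well_founded R -> (forall x, small (fun y => R y x)) ->
  exists Gam : Ix -> T,
    forall x, A (Gam x) /\ lt e1 (Gam x) /\ forall y, R y x -> lt (F (Gam y)) (Gam x).
Proof.
  intros R_wf Hpred.
  pose (step := fun (x : Ix) (rec : forall y, R y x -> T) =>
     epsilon (inhabits e1) (fun a => A a /\ lt e1 a /\ forall y (H : R y x), lt (F (rec y H)) a)).
  pose (Gam := Fix R_wf (fun _ => T) step).
  assert (Gam_unfold : forall x, Gam x = step x (fun y _ => Gam y)).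
  { intros x. apply (Fix_eq R_wf (fun _ => T) step). intros x' f g Hfg.
    replace g with f; [reflexivity|].
    apply functional_extensionality_dep; intros y. apply functional_extensionality_dep; auto. }
  exists Gam. intros x. rewrite Gam_unfold. unfold step.
  destruct (small_image_bounded (fun y => R y x) (fun y => F (Gam y)) (Hpred x)) as [b Hb].
  destruct (A_above_both b e1) as [a [Ha [Hba He1a]]].
  destruct (epsilon_spec (inhabits e1)
              (fun a => A a /\ lt e1 a /\ forall y (H : R y x), lt (F (Gam y)) a)) as [S1 [S2 S3]].
  { exists a. split; [exact Ha | split; [exact He1a|]].
    intros y Hy. exact (wo_trans _ _ _ (Hb y Hy) Hba). }
  split; [exact S1 | split; [exact S2 | intros y Hy; exact (S3 y Hy)]].
Qed.

(* The supremum of an increasing sequence in [A] indexed by [Idx], in which each term exceeds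
   [h] on everything below its predecessors. *)
Lemma closure_point {Ix : Type} (R : Ix -> Ix -> Prop) (Idx : Ix -> Prop) (h : T -> T) (e1 : T) :
  well_founded R -> (exists x, Idx x) -> (forall x, Idx x -> exists x', Idx x' /\ R x x') ->
  small Idx -> (forall x, small (fun y => R y x)) ->
  exists (e : T) (Gam : Ix -> T),
    acc lt A e /\ lt e1 e /\ (forall s, lt s e -> lt (h s) e) /\
    (forall x y, R y x -> lt (Gam y) (Gam x)) /\ (forall x, Idx x -> lt (Gam x) e) /\
    (forall y, lt y e -> exists x, Idx x /\ lt y (Gam x)).
Proof.
  intros R_wf [x0 Hx0] Hnomax HIdx Hpred.
  destruct (partial_choice e1 (fun _ => True) _ (fun s _ => A_above_image h s)) as [B HBs].
  destruct (A_sequence_above R B e1 R_wf Hpred) as [Gam Gam_spec].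
  assert (Gam_mono : forall x y, R y x -> lt (Gam y) (Gam x)).
  { intros x y Hy.
    exact (wo_trans _ _ _ (proj1 (proj2 (HBs (Gam y) I))) (proj2 (proj2 (Gam_spec x)) y Hy)). }
  destruct (small_image_bounded Idx Gam HIdx) as [bg Hbg].
  destruct (wo_sup (fun z => exists x, Idx x /\ Gam x = z)) as [e [Hub Hleast]].
  { exists bg. intros z [x [Hx <-]]. left. exact (Hbg x Hx). }
  assert (Hin : forall x, Idx x -> lt (Gam x) e).
  { intros x Hx. destruct (Hnomax x Hx) as [x' [Hx' Hxx']].
    exact (wo_lt_le_trans _ _ _ (Gam_mono x' x Hxx') (Hub _ (ex_intro _ x' (conj Hx' eq_refl)))). }
  assert (Hcof : forall y, lt y e -> exists x, Idx x /\ lt y (Gam x)).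
  { intros y Hy. apply NNPP. intros Hn.
    assert (Hyub : forall z, (exists x, Idx x /\ Gam x = z) -> le z y).
    { intros z [x [Hx <-]]. apply wo_not_lt_le. intros h'. apply Hn. eauto. }
    exact (wo_le_not_lt _ _ (Hleast y Hyub) Hy). }
  exists e, Gam.
  split; [|split; [|split; [|split; [exact Gam_mono | split; [exact Hin | exact Hcof]]]]].
  - split.
    + destruct (HA_unbounded e) as [a [Ha Hea]]. eauto.
    + intros g Hg. destruct (Hcof g Hg) as [x [Hx Hgx]].
      exists (Gam x). split; [apply Gam_spec | split; [exact Hgx | exact (Hin x Hx)]].
  - exact (wo_trans _ _ _ (proj1 (proj2 (Gam_spec x0))) (Hin x0 Hx0)).
  - intros s Hs. destruct (Hcof s Hs) as [x [Hx Hsx]]. destruct (Hnomax x Hx) as [x' [Hx' Hxx']].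
    apply (wo_trans _ (B (Gam x))); [exact (proj2 (proj2 (HBs (Gam x) I)) s (or_introl Hsx))|].
    exact (wo_trans _ _ _ (proj2 (proj2 (Gam_spec x')) x Hxx') (Hin x' Hx')).
Qed.

Lemma omega_closure_point (h : T -> T) e1 :
  exists e, acc lt A e /\ lt e1 e /\ forall s, lt s e -> lt (h s) e.
Proof.
  assert (Hsmall : forall x : nat, small (fun y => y < x)).
  { intros x. apply (small_injects _ (fun _ : nat => True)); [|exact small_nat].
    apply injects_incl. auto. }
  destruct (closure_point Peano.lt (fun _ => True) h e1 Wf_nat.lt_wf (ex_intro _ 0 I)
              (fun x _ => ex_intro _ (S x) (conj I (PeanoNat.Nat.lt_succ_diag_r x)))
              small_nat Hsmall)
    as [e [_ [He [He1 [Hcl _]]]]].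
  exists e. auto.
Qed.

Definition traces_bounded (e : T) : Prop :=
  forall g : (T -> Prop) -> T, (forall E, cofinal_trace e E -> lt (g E) e) ->
  exists z, lt z e /\ forall E, cofinal_trace e E -> le (g E) z.

Lemma traces_bounded_of_finite e :
  ~ infinite (cofinal_trace e) -> (exists x, lt x e) -> traces_bounded e.
Proof.
  intros HF [x0 Hx0] g Hg.
  destruct (classic (exists E, cofinal_trace e E)) as [Hne|He].
  - destruct (finite_has_max (fun z => exists E, cofinal_trace e E /\ g E = z)) as [m [Hm Hmax]].
    + intros HI. apply HF. apply (infinite_injects _ _ HI).
      apply (injects_of_surj _ _ g Hne). intros z [E [HE Hz]]. eauto.
    + destruct Hne as [E HE]. eauto.
    + exists m. destruct Hm as [E [HE <-]]. split; [exact (Hg E HE)|].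
      intros E' HE'. apply Hmax. eauto.
  - exists x0. split; [exact Hx0|]. intros E HE. exfalso. eauto.
Qed.

Lemma least_unfitting_ordinal e1 : acc lt A e1 -> infinite (cofinal_trace e1) ->
  exists rho, (exists x, lt x rho) /\ (forall x, lt x rho -> exists x', lt x' rho /\ lt x x') /\
    (forall x, lt x rho -> exists e, acc lt A e /\ le e1 e /\ injects (seg x) (cofinal_trace e)) /\
    (forall e, acc lt A e -> le e1 e -> ~ injects (seg rho) (cofinal_trace e)).
Proof.
  intros He1 HI1.
  pose (fits := fun r => exists e, acc lt A e /\ le e1 e /\ injects (seg r) (cofinal_trace e)).
  assert (Hbig : exists r, ~ fits r).
  { destruct K_injects_seg as [bK HbK]. exists bK. intros [e [He [_ Hinj]]].
    apply (K_not_injects_Cs e).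
    exact (injects_trans _ _ _ HbK (injects_trans _ _ _ Hinj (cofinal_traces_injects_Cs e He))). }
  destruct (wo_least _ Hbig) as [rho [Hrho Hmin]].
  assert (Hfit : forall x, lt x rho -> fits x).
  { intros x Hx. apply NNPP. intros Hn. exact (wo_le_not_lt _ _ (Hmin x Hn) Hx). }
  assert (Hnofit : forall e, acc lt A e -> le e1 e -> ~ injects (seg rho) (cofinal_trace e)).
  { intros e He He1e Hinj. apply Hrho. exists e. auto. }
  exists rho. split; [|split; [|split; [exact Hfit | exact Hnofit]]].
  - apply NNPP. intros Hn. destruct (cofinal_trace_exists e1 He1) as [E1 _].
    apply (Hnofit e1 He1 (wo_le_refl e1)). exists (fun _ => E1). split.
    + intros x Hx. exfalso. eauto.
    + intros x y Hx. exfalso. eauto.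
  - intros x Hx. apply NNPP. intros Hn.
    assert (Hs : is_succ lt x rho).
    { split; [exact Hx|]. intros g Hg. apply wo_not_lt_le. intros h'. eauto. }
    destruct (Hfit x Hx) as [e [He [He1e Hinj]]]. apply (Hnofit e He He1e).
    apply (succ_seg_injects_infinite _ x rho Hs); [|exact Hinj].
    exact (infinite_injects _ _ HI1 (cofinal_traces_injects e1 e He He1e)).
Qed.

Lemma traces_map_bounded e1 rho e (g : (T -> Prop) -> T) :
  infinite (cofinal_trace e1) -> (exists x, lt x rho) ->
  (forall x, lt x rho ->
     exists e', acc lt A e' /\ le e1 e' /\ injects (seg x) (cofinal_trace e')) ->
  (forall e', acc lt A e' -> le e1 e' -> ~ injects (seg rho) (cofinal_trace e')) ->
  acc lt A e -> le e1 e -> (forall E, cofinal_trace e E -> lt (g E) rho) ->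
  exists z, lt z rho /\ forall E, cofinal_trace e E -> le (g E) z.
Proof.
  intros HI1 Hne Hfit Hnofit He He1e Hg.
  destruct (partial_choice e (cofinal_trace e)
              (fun E e' => acc lt A e' /\ le e1 e' /\ injects (seg (g E)) (cofinal_trace e'))
              (fun E HE => Hfit (g E) (Hg E HE))) as [ef Hef].
  destruct (small_image_bounded (cofinal_trace e) ef
              (small_injects _ _ (cofinal_traces_injects_Cs e He) (small_Cs e))) as [b Hb].
  destruct (omega_closure_point (fun s => s) (tmax b e)) as [gs [Hgs [Hbgs _]]].
  assert (Hegs : le e gs) by exact (or_introl (wo_le_lt_trans _ _ _ (tmax_ge_r b e) Hbgs)).
  assert (Hefgs : forall E, cofinal_trace e E -> le (ef E) gs).
  { intros E HE. left.
    exact (wo_trans _ _ _ (Hb E HE) (wo_le_lt_trans _ _ _ (tmax_ge_l b e) Hbgs)). }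
  destruct (cofinal_traces_injects_seg gs Hgs) as [bK HbK].
  apply (bounded_of_absorbing (cofinal_trace e) (cofinal_trace gs) g rho).
  - apply (square_injects _ bK); [|exact HbK].
    apply (infinite_injects _ _ HI1).
    exact (cofinal_traces_injects e1 gs Hgs (wo_le_trans _ _ _ He1e Hegs)).
  - exact (cofinal_traces_injects e gs Hgs Hegs).
  - exact (Hnofit gs Hgs (wo_le_trans _ _ _ He1e Hegs)).
  - exact Hne.
  - intros E HE. split; [exact (Hg E HE)|].
    destruct (Hef E HE) as [_ [_ Hinj]].
    exact (injects_trans _ _ _ Hinj (cofinal_traces_injects _ gs Hgs (Hefgs E HE))).
Qed.

Lemma bounded_closure_of_infinite_traces e1 (h : T -> T) :
  acc lt A e1 -> infinite (cofinal_trace e1) ->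
  exists e, acc lt A e /\ lt e1 e /\ traces_bounded e /\ forall s, lt s e -> lt (h s) e.
Proof.
  intros He1 HI1.
  destruct (least_unfitting_ordinal e1 He1 HI1) as [rho [Hne [Hlim [Hfit Hnofit]]]].
  destruct (closure_point lt (seg rho) h e1 wo_wf Hne Hlim (small_seg rho) small_seg)
    as [e [Gam [He [He1e [Hcl [Hmono [Hin Hcof]]]]]]].
  exists e. split; [exact He | split; [exact He1e | split; [|exact Hcl]]].
  intros g Hg.
  destruct (partial_choice e1 (cofinal_trace e) (fun E x => lt x rho /\ lt (g E) (Gam x))
              (fun E HE => Hcof (g E) (Hg E HE))) as [idx Hidx].
  destruct (traces_map_bounded e1 rho e idx HI1 Hne Hfit Hnofit He (or_introl He1e)
              (fun E HE => proj1 (Hidx E HE))) as [xm [Hxm Hxm2]].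
  exists (Gam xm). split; [exact (Hin xm Hxm)|]. intros E HE. left.
  apply (wo_lt_le_trans _ (Gam (idx E))); [exact (proj2 (Hidx E HE))|].
  destruct (Hxm2 E HE) as [Hlt | ->]; [left; exact (Hmono xm _ Hlt) | apply wo_le_refl].
Qed.

Lemma bounded_closure (h : T -> T) :
  exists e, acc lt A e /\ traces_bounded e /\ (exists x, lt x e) /\ forall s, lt s e -> lt (h s) e.
Proof.
  destruct T_inhabited as [t0].
  destruct (classic (exists e1, acc lt A e1 /\ infinite (cofinal_trace e1)))
    as [[e1 [He1 HI]]|Hfin].
  - destruct (bounded_closure_of_infinite_traces e1 h He1 HI) as [e [He [He1e [Hb Hcl]]]].
    exists e. split; [exact He | split; [exact Hb | split; [exists e1; exact He1e | exact Hcl]]].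
  - destruct (omega_closure_point h t0) as [e [He [Ht0 Hcl]]].
    exists e. split; [exact He | split; [|split; [exists t0; exact Ht0 | exact Hcl]]].
    apply traces_bounded_of_finite; [|exists t0; exact Ht0]. intros HI. eauto.
Qed.

Definition separated_below (s e : T) : Prop :=
  forall E E', cofinal_trace e E -> cofinal_trace e E' -> E <> E' ->
  exists x, le x s /\ ~ (E x <-> E' x).

Lemma separated_of_traces_bounded e :
  traces_bounded e -> (exists x, lt x e) -> exists z, lt z e /\ separated_below z e.
Proof.
  intros Hb [x0 Hx0].
  pose (differ := fun (E E' : T -> Prop) x => lt x e /\ ~ (E x <-> E' x)).
  pose (d := fun E E' => epsilon (inhabits x0)
               (fun x => lt x e /\ ((exists y, differ E E' y) -> differ E E' x))).
  assert (Hd : forall E E', lt (d E E') e /\ ((exists y, differ E E' y) -> differ E E' (d E E'))).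
  { intros E E'. apply (epsilon_spec (inhabits x0)).
    destruct (classic (exists y, differ E E' y)) as [[y Hy]|Hn].
    - exists y. split; [exact (proj1 Hy) | intros _; exact Hy].
    - exists x0. split; [exact Hx0 | intros H; contradiction]. }
  assert (Hz : forall E, exists z, lt z e /\ forall E', cofinal_trace e E' -> le (d E E') z).
  { intros E. apply (Hb (fun E' => d E E')). intros E' _. exact (proj1 (Hd E E')). }
  destruct (partial_choice x0 (fun _ : T -> Prop => True) _ (fun E _ => Hz E)) as [zf Hzf].
  destruct (Hb zf (fun E _ => proj1 (Hzf E I))) as [z [Hz1 Hz2]].
  exists z. split; [exact Hz1|]. intros E E' HE HE' Hne.
  assert (Hdiff : exists y, differ E E' y).
  { apply NNPP. intros Hn. apply Hne.
    rewrite <- (cofinal_trace_restrict_self e E HE), <- (cofinal_trace_restrict_self e E' HE').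
    apply functional_extensionality; intros x. apply propositional_extensionality. unfold restrict.
    split; intros [h1 h2]; split; auto; apply NNPP; intros h3; apply Hn; exists x;
      split; auto; tauto. }
  exists (d E E'). split; [|exact (proj2 (proj2 (Hd E E') Hdiff))].
  exact (wo_le_trans _ _ _ (proj2 (Hzf E I) E' HE') (Hz2 E HE)).
Qed.

Lemma separation_unbounded :
  exists s, forall g, exists e, lt g e /\ acc lt A e /\ separated_below s e.
Proof.
  apply NNPP. intros Hn.
  assert (H : forall s, exists g, forall e, lt g e -> acc lt A e -> ~ separated_below s e).
  { intros s. apply NNPP. intros H1. apply Hn. exists s. intros g. apply NNPP. intros H2.
    apply H1. exists g. intros e h1 h2 h3. apply H2. exists e. auto. }
  destruct T_inhabited as [t0].
  destruct (partial_choice t0 (fun _ => True) _ (fun s _ => H s)) as [h Hh].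
  destruct (bounded_closure h) as [e [He [Hb [Hx Hcl]]]].
  destruct (separated_of_traces_bounded e Hb Hx) as [z [Hz Hsep]].
  exact (Hh z I e (Hcl z Hz) He Hsep).
Qed.

Lemma thread_of_coherent_traces (Node : T -> (T -> Prop) -> Prop) :
  (forall x, exists e E, lt x e /\ Node e E) ->
  (forall e E e' E', Node e E -> Node e' E' -> le e e' -> E = restrict lt E' e) ->
  (forall e E, Node e E -> acc lt A e /\ cofinal_trace e E) ->
  exists D, thread lt Cs D.
Proof.
  intros Hnode Hcoh Htr.
  pose (D := trace_union Node).
  assert (HD : forall e E x, Node e E -> lt x e -> (D x <-> E x))
    by exact (trace_union_agrees Node Hcoh).
  assert (Hchosen : forall e E, Node e E ->
                    exists a, A a /\ lt e a /\ E = restrict lt (chosen_club a) e).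
  { intros e E HN. destruct (proj2 (Htr e E HN) e) as [a [Ha [_ [Hea HE]]]]. eauto. }
  exists D. split; [split|].
  - intros g. destruct (HA_unbounded g) as [a [Ha Hga]].
    destruct (Hnode a) as [e [E [Hae HN]]]. exists a. split; [|exact Hga].
    apply (HD e E a HN Hae). destruct (Hchosen e E HN) as [b [Hb [Heb ->]]].
    split; [|exact Hae]. exact (proj2 (chosen_club_spec b Hb) a Ha (wo_trans _ _ _ Hae Heb)).
  - intros b Hlp. destruct (Hnode b) as [e [E [Hbe HN]]].
    apply (HD e E b HN Hbe). destruct (Hchosen e E HN) as [c [Hc [Hec Ec]]].
    rewrite Ec. split; [|exact Hbe].
    destruct HC as [_ [Hclub _]].
    destruct (Hclub c _ (proj1 (chosen_club_spec c Hc))) as [_ [_ Hclosed]].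
    apply Hclosed; [exact (wo_trans _ _ _ Hbe Hec)|].
    destruct Hlp as [Hl1 Hl2]. split; [exact Hl1|].
    intros g Hg. destruct (Hl2 g Hg) as [a [Ha [h1 h2]]]. exists a. split; [|auto].
    apply (HD e E a HN (wo_trans _ _ _ h2 Hbe)) in Ha. rewrite Ec in Ha. exact (proj1 Ha).
  - intros a' [[a [Ha Hle]] Hacc]. destruct (Hnode a) as [e [E [Hae HN]]].
    assert (Hbelow : forall y, lt y a' -> lt y e).
    { intros y Hy. exact (wo_trans _ _ _ Hy (wo_le_lt_trans _ _ _ Hle Hae)). }
    assert (HDE : restrict lt D a' = restrict lt E a').
    { apply functional_extensionality; intros x. apply propositional_extensionality.
      unfold restrict.
      split; intros [h1 h2]; split; auto; apply (HD e E x HN (Hbelow x h2)); exact h1. }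
    assert (HaccE : acc lt E a').
    { split.
      - exists a. split; [apply (HD e E a HN Hae); exact Ha | exact Hle].
      - intros g Hg. destruct (Hacc g Hg) as [b [Hb [h1 h2]]]. exists b.
        split; [apply (HD e E b HN (Hbelow b h2)); exact Hb | auto]. }
    rewrite HDE. destruct (Htr e E HN) as [He HE]. destruct HC as [_ [_ [_ [_ HCcoh]]]].
    exact (HCcoh e E a' (cofinal_trace_Cs e E He HE) HaccE).
Qed.

Lemma thread_of_separation s :
  (forall g, exists e, lt g e /\ acc lt A e /\ separated_below s e) -> exists D, thread lt Cs D.
Proof.
  intros Hs. destruct (Hs s) as [e0 [Hse0 [He0 _]]].
  destruct (cofinal_trace_exists e0 He0) as [E0 HE0].
  pose (Node := fun e E => acc lt A e /\ separated_below s e /\ le e0 e /\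
                           cofinal_trace e E /\ restrict lt E e0 = E0).
  assert (Huniq : forall e E E', Node e E -> Node e E' -> E = E').
  { intros e E E' [_ [Hsep [_ [HE HE0e]]]] [_ [_ [_ [HE' HE'0]]]]. apply NNPP. intros Hne.
    destruct (Hsep E E' HE HE' Hne) as [x [Hxs Hx]]. apply Hx.
    assert (Hx0 : lt x e0) by exact (wo_le_lt_trans _ _ _ Hxs Hse0).
    assert (Hr : restrict lt E e0 x <-> restrict lt E' e0 x) by (rewrite HE0e, HE'0; reflexivity).
    split; intros h; [exact (proj1 (proj1 Hr (conj h Hx0))) |
                      exact (proj1 (proj2 Hr (conj h Hx0)))]. }
  apply (thread_of_coherent_traces Node).
  - intros x. destruct (Hs (tmax x e0)) as [e [Hxe [He Hsep]]].
    assert (He0e : le e0 e) by exact (or_introl (wo_le_lt_trans _ _ _ (tmax_ge_r x e0) Hxe)).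
    destruct (cofinal_trace_extend e0 e E0 He He0e HE0) as [E [HE HEE0]].
    exists e, E. split; [exact (wo_le_lt_trans _ _ _ (tmax_ge_l x e0) Hxe)|]. unfold Node. auto.
  - intros e E e' E' HN [He' [_ [_ [HE' HE'0]]]] Hee'. apply (Huniq e); [exact HN|].
    destruct HN as [He [Hsep [He0e _]]]. unfold Node.
    split; [exact He | split; [exact Hsep | split; [exact He0e | split]]].
    + exact (cofinal_trace_restrict e e' E' Hee' HE').
    + rewrite restrict_restrict; [exact HE'0 | exact He0e].
  - intros e E [He [_ [_ [HE _]]]]. exact (conj He HE).
Qed.

End Thread.
End Regular.
End WellOrder.

Theorem corollary2p5 (T : Type) (lt : T -> T -> Prop) (K : Type)
  (Cs : T -> (T -> Prop) -> Prop) (A : T -> Prop) :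
  regular_uncountable_cardinal lt ->
  card_lt K T ->
  coherent_seq lt K Cs ->
  (forall g, exists a, A a /\ le lt g a) ->
  (forall alpha, A alpha ->
     exists C, Cs alpha C /\ (forall b, A b -> lt b alpha -> C b)) ->
  exists D, thread lt Cs D.
Proof.
  intros HR HK HC HA_unbounded HA_covered.
  destruct (separation_unbounded T lt (proj1 HR) HR K Cs A HK HC HA_unbounded HA_covered) as [s Hs].
  exact (thread_of_separation T lt (proj1 HR) HR K Cs A HK HC HA_unbounded HA_covered s Hs).
Qed.
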